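(* Let $p$ be an odd prime and $G$ a finite $p$-group with cyclic commutator subgroup. Write $|G'|=p^m$ and $|G'\cap \mathrm{Z}(G)|=p^t$. Then ${\rm C}_G(G')=\{g\in G: g^{p^t}\in \mathrm{Z}(G)G'\}$ and ${\rm C}_G(G')'=\mho_{m-t}(G')$. Moreover, for every subgroup $N$ of $G$ contained in ${\rm C}_G(G')$ one has $\exp(N)=p^{\min\{n : {\mathrm D}_{p^n}(N)=1\}}$.
   Context: $\mathrm{Z}(G)$ is the center; $\mho_j(X)=\langle x^{p^j}:x\in X\rangle$. The Jennings series of a finite $p$-group $N$ is ${\mathrm D}_n(N)=\prod_{ip^j\ge n}\mho_j(\gamma_i(N))$, with $\gamma_i$ the lower central series. *)

From HB Require Import structures.
From mathcomp Require Import all_boot all_fingroup all_solvable.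
Set Implicit Arguments. Unset Strict Implicit. Unset Printing Implicit Defensive.
Local Open Scope group_scope.

(* Jennings series of a finite p-group N:
   D_n(N) = prod_{i p^j >= n} Mho_j(gamma_i(N)).
   The product of these normal subgroups is their join.  Terms with i > n or
   j > n are redundant (they lie in gamma_n(N) = term (n,0), resp. in the
   term (i,n), since i*p^n >= n), so the index range is truncated to
   1 <= i <= n, 0 <= j <= n. *)
Definition jennings (gT : finGroupType) (p n : nat) (N : {set gT}) : {set gT} :=
  <<\bigcup_(i < n.+1 | 0 < i)
      \bigcup_(j < n.+1 | n <= i * p ^ j) 'Mho^j('L_i(N))>>.

(* Let K = G' = <c> and C = C_G(K).  As K is abelian, commutators satisfy
   the Jacobi-type identity [g, [a, b]] [g, b, a] = [g, a, b], and every x in G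
   acts on K as a power map y |-> y^u with u = 1 mod p; since p is odd, the
   geometric sum 1 + u + ... + u^(p^k - 1) is p^k times a unit mod p, so
   [x^(p^k), a] = [x, a]^(p^k w) with w prime to p.  Moreover K meets Z(G) in
   its subgroup of order p^t, which is Mho^(m-t)(K), while [K, G] = Mho^t(K).
   These facts give both inclusions of C = {g | g^(p^t) in Z(G) K}.
   By the three-subgroup lemma C' lies in K and in Z(G).  Conversely G/C embeds
   in the cyclic group Aut K, so K = [C, G] is generated by one commutator
   [x, h], and then [x^(p^(m-t)), h] generates Mho^(m-t)(K) inside C'.
   Finally every N <= C has class at most 2, so for p >= 3 the Jennings term
   D_(p^n)(N) is Mho^n(N), which is trivial exactly when exp N divides p^n. *)

From HB Require Import structures.
From mathcomp Require Import all_boot all_fingroup all_solvable.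
From mathcomp Require Import zify ring.
Set Implicit Arguments. Unset Strict Implicit. Unset Printing Implicit Defensive.

Definition geom_sum (u n : nat) : nat := \sum_(i < n) u ^ i.

Lemma geom_sumS u n : geom_sum u n.+1 = (u * geom_sum u n).+1.
Proof.
rewrite /geom_sum big_ord_recl expn0 big_distrr /= add1n; congr _.+1.
by apply: eq_bigr => i _; rewrite /bump /= add1n expnS.
Qed.

Lemma geom_sumSr u n : geom_sum u n.+1 = geom_sum u n + u ^ n.
Proof. by rewrite /geom_sum big_ord_recr. Qed.

Lemma geom_sumD u a b : geom_sum u (a + b) = geom_sum u a + u ^ a * geom_sum u b.
Proof.
rewrite /geom_sum big_split_ord /= big_distrr /=; congr (_ + _).
by apply: eq_bigr => i _; rewrite expnD.
Qed.

Lemma geom_sumM u a b : geom_sum u (a * b) = geom_sum (u ^ a) b * geom_sum u a.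
Proof.
elim: b => [|b IHb]; first by rewrite muln0 /geom_sum !big_ord0.
by rewrite mulnS geom_sumD IHb geom_sumS mulnA mulSn.
Qed.

Lemma geom_sum_prime p u : prime p -> odd p -> u %% p = 1 ->
  exists2 w, coprime w p & geom_sum u p = p * w.
Proof.
move=> p_pr p_odd u1; pose l := u %/ p.
have def_u : u = 1 + p * l by rewrite {1}(divn_eq u p) u1 addnC mulnC.
(* Modulo p^2, u^i = 1 + i p l, so the sum is p + C(p,2) p l. *)
have expu i : exists a, u ^ i = 1 + i * p * l + p ^ 2 * a.
  elim: i => [|i [a IHi]]; first by exists 0; rewrite expn0 !mul0n muln0 !addn0.
  by exists (i * l * l + a + p * a * l); rewrite expnSr IHi def_u; ring.
have sumu n : exists b, geom_sum u n = n + 'C(n, 2) * p * l + p ^ 2 * b.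
  elim: n => [|n [b IHn]].
    by exists 0; rewrite /geom_sum big_ord0 bin0n !mul0n muln0.
  have [a expun] := expu n.
  by exists (b + a); rewrite geom_sumSr IHn expun binS bin1; ring.
have [b ->] := sumu p.
have [h bin2p] : exists h, 'C(p, 2) = p * h.
  exists p.-1./2; rewrite bin2 -{1}(odd_double_half p.-1).
  by rewrite -subn1 oddB ?prime_gt0 // p_odd /= -doubleMr doubleK.
exists (1 + p * (h * l + b)); last by rewrite bin2p; ring.
by rewrite -coprime_modl addnC mulnC modnMDl modn_small ?prime_gt1 // coprime1n.
Qed.

Lemma geom_sum_pfactor p u k : prime p -> odd p -> u %% p = 1 ->
  exists2 w, coprime w p & geom_sum u (p ^ k) = p ^ k * w.
Proof.
move=> p_pr p_odd u1; elim: k => [|k [w1 cw1 IHk]].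
  by exists 1; rewrite ?coprime1n // expn0 /geom_sum big_ord1 expn0.
have upk1 : u ^ p ^ k %% p = 1 by rewrite -modnXm u1 exp1n modn_small ?prime_gt1.
have [w2 cw2 sum_p] := geom_sum_prime p_pr p_odd upk1.
exists (w2 * w1); first by rewrite coprimeMl cw1 cw2.
by rewrite expnSr geom_sumM IHk sum_p; ring.
Qed.

Local Open Scope group_scope.

Lemma cycleX_coprime (gT : finGroupType) (p : nat) (x : gT) w :
  p.-elt x -> coprime w p -> <[x ^+ w]> = <[x]>.
Proof.
move=> /p_natP[k ox] cwp; apply/esym/eqP; rewrite -/(generator _ _).
by rewrite generator_coprime ox coprimeXl // coprime_sym.
Qed.

Lemma pcycle_gen_generator (gT : finGroupType) (p : nat) (c : gT) (A : {set gT}) :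
    prime p -> p.-elt c -> 1 \in A -> A \subset <[c]> -> <[c]> \subset <<A>> ->
  exists2 a, a \in A & generator <[c]> a.
Proof.
move=> p_pr /p_natP[m oc] A1 sAc sc_A.
have [m0 | m_gt0] := posnP m.
  have c1 : c = 1 by apply/eqP; rewrite -order_eq1 oc m0.
  by exists 1; rewrite // /generator c1 cycle1.
case: (boolP [exists a in A, generator <[c]> a]) => [/exists_inP[a] | no_gen].
  by exists a.
have sAcp : A \subset <[c ^+ p]>.
  apply/subsetP=> a Aa; have /cycleP[i def_a] := subsetP sAc a Aa.
  rewrite def_a in Aa *.
  have : ~~ coprime #[c] i.
    move: no_gen; apply: contra => ci; apply/exists_inP.
    by exists (c ^+ i); rewrite ?generator_coprime.
  rewrite oc coprime_pexpl // prime_coprime // negbK => /dvdnP[q ->].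
  by rewrite mulnC expgM mem_cycle.
have sc_cp : <[c]> \subset <[c ^+ p]> by rewrite (subset_trans sc_A) ?gen_subG.
case: m oc m_gt0 => // k oc _; have := cardSg sc_cp.
rewrite -!orderE orderXdiv oc expnS ?dvdn_mulr // mulKn ?prime_gt0 // -expnS.
by rewrite dvdn_Pexp2l ?prime_gt1 // ltnn.
Qed.

Section DerivedSubgroup.

Variables (gT : finGroupType) (G : {group gT}).

Lemma mem_commg_der1 x y : x \in G -> y \in G -> [~ x, y] \in G^`(1).
Proof. by move=> Gx Gy; rewrite derg1 mem_commg. Qed.

Lemma commXg_geom_sum x a u n :
    x \in G -> a \in G -> {in G^`(1), forall y, y ^ x = y ^+ u} ->
  [~ x ^+ n, a] = [~ x, a] ^+ geom_sum u n.
Proof.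
move=> Gx Ga conjx; elim: n => [|n IHn]; first by rewrite comm1g /geom_sum big_ord0.
by rewrite expgSr commMgJ IHn conjXg conjx ?mem_commg_der1 // -expgM geom_sumS expgSr.
Qed.

Lemma der1_cent_der1_sub_center : ('C_G(G^`(1)))^`(1) \subset 'Z(G).
Proof.
set C := 'C_G(G^`(1)).
have cKC : [~: G^`(1), C] = 1 by apply/commG1P; rewrite centsC subsetIr.
have sCCG : [~: C, C, G] = 1.
  by apply: three_subgroup; apply/trivgP;
    rewrite -cKC commgSS // derg1 commgSS ?subsetIl.
rewrite subsetI (subset_trans (der_sub 1 C)) ?subsetIl //=; exact/commG1P.
Qed.

Lemma lcn3_cent_der1_eq1 (N : {group gT}) : N \subset 'C_G(G^`(1)) -> 'L_3(N) = 1.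
Proof.
move=> sNC; rewrite lcnSn lcn2; apply/commG1P.
have sNG : N \subset G := subset_trans sNC (subsetIl G _).
rewrite (subset_trans (dergS 1 sNC)) // (subset_trans der1_cent_der1_sub_center) //.
by rewrite subIset // centS ?orbT.
Qed.

Lemma cyclic_quotient_cent_der1 (p : nat) :
  odd p -> p.-group G^`(1) -> cyclic G^`(1) -> cyclic (G / 'C_G(G^`(1))).
Proof.
move=> p_odd pK cycK; have [-> | ntK] := eqVneq G^`(1) 1.
  by rewrite cent1T setIT trivg_quotient cyclic1.
(* For odd p the automorphism group of a cyclic p-group is cyclic. *)
have cycA : cyclic (Aut G^`(1)).
  have := cyclic_pgroup_Aut_structure pK cycK ntK; rewrite /= p_odd.
  move=> [? [_ [_ cycF _ _]]]; case: ifP => _; first by move=> ->.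
  by case=> _ [_ _ _ [[]]].
have := first_isog_loc (conj_aut G^`(1)) (der_norm 1 G).
rewrite ker_conj_aut => /isog_cyclic ->.
exact: cyclicS (Aut_conj_aut _ _) cycA.
Qed.

Lemma der1_sub_commg_cyclic_quotient (H : {group gT}) :
  G \subset 'N(H) -> cyclic (G / H) -> G^`(1) \subset [~: H, G].
Proof.
move=> nHG /cyclicP[X defX].
have /morphimP[x Nx Gx def_X] : X \in G / H by rewrite defX cycle_id.
have decG b : b \in G -> exists k, exists2 h, h \in H & b = h * x ^+ k.
  move=> Gb; have /cycleP[k ek] : coset H b \in <[X]> by rewrite -defX mem_quotient.
  have : coset H b = coset H (x ^+ k) by rewrite ek def_X morphX.
  move/(rcoset_kercosetP (subsetP nHG b Gb) (groupX k Nx))/rcosetP=> [h Hh ->].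
  by exists k, h.
have nRG : G \subset 'N([~: H, G]) by rewrite normsR ?normG.
have RJ h y z : h \in H -> y \in G -> z \in G -> [~ h, y] ^ z \in [~: H, G].
  by move=> Hh Gy Gz; rewrite memJ_norm ?mem_commg ?(subsetP nRG).
rewrite derg1 gen_subG; apply/subsetP=> _ /imset2P[a b Ga Gb ->].
have [i [h1 Hh1 ->]] := decG a Ga; have [j [h2 Hh2 def_b]] := decG b Gb.
rewrite commMgJ groupM ?RJ ?groupX // def_b commgMJ.
have /commgP/eqP-> := commuteX2 i j (commute_refl x).
by rewrite mul1g -invg_comm conjVg groupV RJ ?groupX.
Qed.

Hypothesis cKK : abelian G^`(1).

Lemma commXg_der1 y x n :
  y \in G^`(1) -> x \in G -> [~ y ^+ n, x] = [~ y, x] ^+ n.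
Proof.
move=> Ky Gx; have Gy := subsetP (der_sub 1 G) y Ky.
by rewrite commXg //; apply: (centsP cKK) => //; apply: mem_commg_der1.
Qed.

Lemma commg_der1_Jacobi g a b : g \in G -> a \in G -> b \in G ->
  [~ g, [~ a, b]] * [~ g, b, a] = [~ g, a, b].
Proof.
move=> Gg Ga Gb.
have cK : {in G^`(1) &, forall y z, commute y z} by move=> y z Ky; apply: (centsP cKK).
have fixK y z : y \in G^`(1) -> z \in G^`(1) -> y ^ z = y.
  by move=> Ky Kz; apply/conjg_fixP/commgP/cK.
(* Expand both sides of E and cancel in the abelian group G^`(1). *)
have E : [~ g, a * b] = [~ g, b * a * [~ a, b]] by rewrite -commgC.
rewrite commgMJ [in RHS]commgMJ [X in _ = _ * X]fixK ?mem_commg_der1 ?groupM // in E.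
rewrite [X in _ = _ * X]commgMJ !conjg_mulR in E.
set A := [~ g, a] in E *; set B := [~ g, b] in E *.
have [KA KB] : A \in G^`(1) /\ B \in G^`(1) by rewrite !mem_commg_der1.
have Kgab : [~ g, [~ a, b]] \in G^`(1) by rewrite !mem_commg_der1 ?groupR.
rewrite (mulgA B) (cK _ _ KB KA) (mulgA A B) (mulgA _ (A * B)) in E.
rewrite (cK _ _ Kgab (groupM KA KB)) -(mulgA (A * B)) in E.
by apply: (mulgI (A * B)); rewrite -E.
Qed.

End DerivedSubgroup.

Section Jennings.

Variables (gT : finGroupType) (p : nat) (N : {group gT}).
Hypothesis pN : p.-group N.

Lemma Mho_eq1_exponent j : ('Mho^j(N) == 1) = (exponent N %| p ^ j).
Proof.
apply/idP/idP=> [/eqP Mho1 | /exponentP Np1].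
  apply/exponentP=> x Nx.
  by have := Mho_p_elt j Nx (mem_p_elt pN Nx); rewrite Mho1 => /set1P.
rewrite (MhoE _ pN) -subG1 gen_subG; apply/subsetP=> _ /imsetP[x Nx ->].
by rewrite inE Np1.
Qed.

Lemma jennings_ppow_eq1 k : 2 < p -> 'L_3(N) = 1 ->
  (jennings p (p ^ k) N == 1) = (exponent N %| p ^ k).
Proof.
move=> p_gt2 L3N; have p_gt0 : 0 < p by apply: leq_trans p_gt2.
rewrite -Mho_eq1_exponent -!subG1 /jennings gen_subG; apply/idP/idP=> [sJ1 | sMho1].
  have i1 : 1 < (p ^ k).+1 by rewrite ltnS expn_gt0 p_gt0.
  have jk : k < (p ^ k).+1 by rewrite ltnS ltnW // ltn_expl // ltnW.
  apply: subset_trans sJ1; rewrite -{1}(lcn1 N).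
  apply: subset_trans (bigcup_sup (Ordinal i1) _) => //=.
  by apply: subset_trans (bigcup_sup (Ordinal jk) _) => //=; rewrite mul1n.
apply/bigcupsP=> [[i _]] /= i_gt0; apply/bigcupsP=> [[j _]] /= le_pk_ipj.
have [le_kj | lt_jk] := leqP k j.
  by rewrite (subset_trans (MhoS _ (lcn_sub i N))) // (subset_trans (Mho_leq _ le_kj)).
(* Here p ^ j.+1 <= i * p ^ j, so i >= p >= 3 and 'L_i(N) is trivial. *)
have le3i : 3 <= i.
  have : p ^ j.+1 <= i * p ^ j by apply: leq_trans le_pk_ipj; rewrite leq_exp2l // ltnW.
  by rewrite expnS leq_pmul2r ?expn_gt0 ?p_gt0 // => /(leq_trans p_gt2).
have /trivgP-> : 'L_i(N) \subset [1] by rewrite -L3N lcn_sub_leq.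
by rewrite Mho1.
Qed.

End Jennings.

Section CyclicDerivedSubgroup.

Variables (gT : finGroupType) (p : nat) (G : {group gT}) (m t : nat) (c : gT).
Hypotheses (p_pr : prime p) (p_odd : odd p) (pG : p.-group G).
Hypotheses (defK : G^`(1) = <[c]>) (oc : #[c] = (p ^ m)%N).
Hypothesis oKZ : #|G^`(1) :&: 'Z(G)| = (p ^ t)%N.

Let p_gt0 := prime_gt0 p_pr.
Let p_gt1 := prime_gt1 p_pr.
Let sKG := subsetP (der_sub 1 G).
Let pK : p.-group G^`(1) := pgroupS (der_sub 1 G) pG.

Let Kc : c \in G^`(1).
Proof. by rewrite defK cycle_id. Qed.

Let cKK : abelian G^`(1).
Proof. by rewrite defK cycle_abelian. Qed.

Let pc : p.-elt c.
Proof. exact: mem_p_elt pK Kc. Qed.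

Let order_cX k : k <= m -> #[c ^+ (p ^ k)] = (p ^ (m - k))%N.
Proof. by move=> le_km; rewrite orderXdiv oc ?dvdn_exp2l // -expnB. Qed.

Lemma leq_t_m : t <= m.
Proof.
by rewrite -(dvdn_Pexp2l _ _ p_gt1) -oKZ -oc orderE -defK cardSg ?subsetIl.
Qed.

Lemma der1_center_cycle : G^`(1) :&: 'Z(G) = <[c ^+ (p ^ (m - t))]>.
Proof.
apply/eqP; rewrite (eq_subG_cyclic (cycle_cyclic c)) ?cycleX //=; last first.
  by rewrite -defK subsetIl.
by rewrite oKZ -orderE order_cX ?leq_subr // subKn ?leq_t_m.
Qed.

Lemma der1_center_Mho : G^`(1) :&: 'Z(G) = 'Mho^(m - t)(G^`(1)).
Proof. by rewrite der1_center_cycle defK (Mho_p_cycle _ pc). Qed.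

Lemma expg_der1_center y : y \in G^`(1) -> y ^+ (p ^ (m - t)) \in 'Z(G).
Proof.
rewrite defK => /cycleP[i ->]; rewrite expgAC.
have : c ^+ (p ^ (m - t)) ^+ i \in G^`(1) :&: 'Z(G).
  by rewrite der1_center_cycle mem_cycle.
by case/setIP.
Qed.

Lemma commg_der1_expg_eq1 y x :
  y \in G^`(1) -> x \in G -> [~ y, x] ^+ (p ^ (m - t)) = 1.
Proof.
move=> Ky Gx; rewrite -(commXg_der1 cKK) //.
by have /centerP[_ cyG] := expg_der1_center Ky; apply/eqP/commgP/cyG.
Qed.

Lemma conj_der1_expg x : x \in G ->
  exists2 u, (u %% p = 1)%N & {in G^`(1), forall y, y ^ x = y ^+ u}.
Proof.
move=> Gx; have [c1 | ntc] := eqVneq c 1.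
  exists 1%N; first by rewrite modn_small.
  by move=> y; rewrite defK c1 cycle1 => /set1P->; rewrite conj1g expg1.
have /cycleP[u cx] : c ^ x \in <[c]>.
  by rewrite -defK memJ_norm ?(subsetP (der_norm 1 G)).
have conjx : {in G^`(1), forall y, y ^ x = y ^+ u}.
  by move=> y; rewrite defK => /cycleP[i ->]; rewrite conjXg cx expgAC.
exists u => //.
have t_gt0 : 0 < t.
  have ntK : G^`(1) != 1 by rewrite defK cycle_eq1.
  have := meet_center_nil (pgroup_nil pG) (der_normal 1 G) ntK.
  by rewrite -cardG_gt1 oKZ -{1}(expn0 p) ltn_exp2l.
(* x fixes the central element z of order p, so z ^+ u = z and u = 1 mod p. *)
set z := c ^+ (p ^ m.-1).
have /centerP[_ cGz] : z \in 'Z(G).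
  rewrite /z (_ : m.-1 = t.-1 + (m - t))%N; last by have := leq_t_m; lia.
  by rewrite expnD expgM expg_der1_center ?groupX.
have oz : #[z] = p.
  by rewrite order_cX ?leq_pred // (_ : m - m.-1 = 1)%N //; have := leq_t_m; lia.
have : z ^+ u == z ^+ 1.
  by rewrite expg1 -conjx ?groupX //; apply/eqP/conjg_fixP/commgP/cGz.
by rewrite eq_expg_mod_order oz (modn_small p_gt1) => /eqP.
Qed.

Lemma commXg_pfactor x k : x \in G ->
  exists2 w, coprime w p &
    {in G, forall a, [~ x ^+ (p ^ k), a] = [~ x, a] ^+ (p ^ k * w)}.
Proof.
move=> Gx; have [u u1 conjx] := conj_der1_expg Gx.
have [w cwp sum_pk] := geom_sum_pfactor k p_pr p_odd u1.
by exists w => // a Ga; rewrite (commXg_geom_sum _ Gx Ga conjx) sum_pk.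
Qed.

Lemma commg_mem_cycle_expg a : a \in G -> [~ c, a] \in <[c ^+ (p ^ t)]>.
Proof.
move=> Ga; have /cycleP[i def_ca] : [~ c, a] \in <[c]>.
  by rewrite -defK mem_commg_der1 // sKG.
have := commg_der1_expg_eq1 Kc Ga; rewrite def_ca -expgM => /eqP.
rewrite -order_dvdn oc -{1}(subnKC leq_t_m) expnD dvdn_pmul2r ?expn_gt0 ?p_gt0 //.
by case/dvdnP=> j ->; rewrite mulnC expgM mem_cycle.
Qed.

Lemma exists_commg_generator : exists2 x, x \in G & c ^+ (p ^ t) \in <[[~ c, x]]>.
Proof.
have le_tm := leq_t_m; case def_mt: (m - t) => [|r].
  exists 1; rewrite // commg1 (_ : t = m) -?oc ?expg_order //; lia.
case: (boolP [exists x in G, [~ c, x] ^+ (p ^ r) != 1]).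
  case/exists_inP=> x Gx ncx; exists x => //.
  suff -> : <[[~ c, x]]> = <[c ^+ (p ^ t)]> by apply: cycle_id.
  apply/eqP; rewrite eqEcard cycle_subG commg_mem_cycle_expg // -!orderE order_cX //.
  have : #[[~ c, x]] %| p ^ r.+1 by rewrite order_dvdn -def_mt commg_der1_expg_eq1.
  case/(dvdn_pfactor _ _ p_pr)=> j _ o_cx; rewrite o_cx def_mt leq_exp2l //.
  by apply: contraR ncx; rewrite /= -ltnNge ltnS -order_dvdn o_cx; apply: dvdn_exp2l.
(* Otherwise c ^+ (p ^ r) would be a central element of order p ^ t.+1. *)
move=> /exists_inPn cpr_central; exfalso.
have : c ^+ (p ^ r) \in G^`(1) :&: 'Z(G).
  rewrite inE groupX //=; apply/centerP; split; first by rewrite groupX ?sKG.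
  move=> x Gx; apply/commgP; rewrite (commXg_der1 cKK) //.
  by have := cpr_central x Gx; rewrite negbK.
move/order_dvdG; rewrite oKZ order_cX; last by lia.
by rewrite dvdn_Pexp2l //; lia.
Qed.

Lemma cent_der1_expg_center g :
  g \in G -> g \in 'C(G^`(1)) -> g ^+ (p ^ t) \in 'Z(G) * G^`(1).
Proof.
move=> Gg /centP cgK.
have [x0 Gx0 /cycleP[j def_cpt]] := exists_commg_generator.
set d := [~ g, x0] ^+ j.
have Kd : d \in G^`(1) by rewrite groupX ?mem_commg_der1.
have commd x : x \in G -> [~ d, x] = [~ g ^+ (p ^ t), x].
  move=> Gx; have /cycleP[i def_gx] : [~ g, x] \in <[c]>.
    by rewrite -defK mem_commg_der1.
  have : [~ g, [~ x0, x]] = 1 by apply/eqP/commgP/cgK; rewrite mem_commg_der1.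
  move/(congr1 (mulg^~ [~ g, x, x0])); rewrite (commg_der1_Jacobi cKK) // mul1g.
  rewrite /d (commXg_der1 cKK) ?mem_commg_der1 // => ->.
  rewrite def_gx (commXg_der1 cKK) // -expgM mulnC expgM -def_cpt expgAC -def_gx.
  by rewrite commXg //; apply/cgK; rewrite mem_commg_der1.
have Zgd : g ^+ (p ^ t) * d^-1 \in 'Z(G).
  apply/centerP; split=> [|x Gx]; first by rewrite groupM ?groupX ?groupV // sKG.
  by apply/commgP; rewrite commMgJ -commd // -commMgJ mulgV comm1g.
by rewrite -(mulgKV d (g ^+ _)) mem_mulg.
Qed.

Lemma expg_center_cent_der1 g :
  g \in G -> g ^+ (p ^ t) \in 'Z(G) * G^`(1) -> g \in 'C(G^`(1)).
Proof.
move=> Gg /mulsgP[z d /centerP[_ cGz] Kd def_gpt].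
have [w cwp commgX] := commXg_pfactor t Gg.
have commd a : a \in G -> [~ d, a] = [~ g, a] ^+ (p ^ t * w).
  move=> Ga; rewrite -commgX // def_gpt commMgJ.
  by have /commgP/eqP-> := cGz a Ga; rewrite conj1g mul1g.
have commK a : a \in G ->
    exists k, {in G^`(1), forall y, [~ y, a] = y ^+ (p ^ t * w) ^+ k}.
  move=> Ga; have : [~ c, a] \in <[c ^+ (p ^ t * w)]>.
    have pcpt : p.-elt (c ^+ (p ^ t)) by apply: p_eltX.
    by rewrite expgM (cycleX_coprime pcpt cwp) commg_mem_cycle_expg.
  case/cycleP=> k def_ca; exists k => y; rewrite defK => /cycleP[i ->].
  by rewrite (commXg_der1 cKK) // def_ca -!expgM; congr (c ^+ _); ring.
(* Both factors of the Jacobi identity reduce to the same power of d. *)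
have cg_commg a b : a \in G -> b \in G -> [~ g, [~ a, b]] = 1.
  move=> Ga Gb; have [ka commKa] := commK a Ga; have [kb commKb] := commK b Gb.
  have := commg_der1_Jacobi cKK Gg Ga Gb.
  rewrite (commKa [~ g, b]) ?(commKb [~ g, a]) ?mem_commg_der1 // -!commd //.
  rewrite (commKa d) // (commKb d) //.
  by move/(canRL (mulgK _))->; rewrite [X in _ * X^-1]expgAC mulgV.
rewrite -sub_cent1 derg1 gen_subG; apply/subsetP=> _ /imset2P[a b Ga Gb ->].
by apply/cent1P/commute_sym/commgP/eqP/cg_commg.
Qed.

Lemma cent_der1E : 'C_G(G^`(1)) = [set g in G | g ^+ (p ^ t) \in 'Z(G) * G^`(1)].
Proof.
apply/setP=> g; rewrite !inE; apply/andP/andP=> [] [Gg].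
  by move/(cent_der1_expg_center Gg).
by move/(expg_center_cent_der1 Gg).
Qed.

Lemma der1_cent_der1 : ('C_G(G^`(1)))^`(1) = 'Mho^(m - t)(G^`(1)).
Proof.
set C := 'C_G(G^`(1)); have sCG : C \subset G := subsetIl G _.
rewrite -der1_center_Mho; apply/eqP; rewrite eqEsubset subsetI dergS //=.
rewrite der1_cent_der1_sub_center /=.
have nCG : G \subset 'N(C) by rewrite normsI ?normG ?norms_cent ?der_norm.
have [_ /imset2P[h x Ch Gx ->] gen_hx] :
    exists2 s, s \in commg_set C G & generator <[c]> s.
  apply: pcycle_gen_generator pc _ _ _ => //.
  - by rewrite -(commg1 1) imset2_f.
  - apply/subsetP=> _ /imset2P[h x Ch Gx ->].
    by rewrite -defK mem_commg_der1 ?(subsetP sCG h Ch).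
  rewrite -defK der1_sub_commg_cyclic_quotient //.
  by apply: cyclic_quotient_cent_der1 p_odd pK _; rewrite defK cycle_cyclic.
have [w cwp commgX] := commXg_pfactor (m - t) Gx.
have Cxpn : x ^+ (p ^ (m - t)) \in C.
  rewrite inE groupX //=; apply/centP=> y Ky; apply/commgP.
  rewrite commgX ?(sKG Ky) // expgM -invg_comm expgVn.
  by rewrite commg_der1_expg_eq1 // invg1 expg1n.
have : [~ x ^+ (p ^ (m - t)), h] \in C^`(1) by rewrite derg1 mem_commg.
rewrite commgX ?(subsetP sCG h Ch) // -cycle_subG; apply: subset_trans.
have pxh : p.-elt [~ x, h].
  by rewrite (mem_p_elt pK) ?mem_commg_der1 ?(subsetP sCG h Ch).
rewrite expgM (cycleX_coprime (p_eltX _ pxh) cwp) -(Mho_p_cycle _ pxh).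
by rewrite der1_center_Mho defK (eqP gen_hx) -cycleV invg_comm.
Qed.

End CyclicDerivedSubgroup.

Theorem lemma4p1 (gT : finGroupType) (p : nat) (G : {group gT}) (m t : nat) :
  prime p -> odd p -> p.-group G -> cyclic (G^`(1)) ->
  #|G^`(1)| = (p ^ m)%N -> #|G^`(1) :&: 'Z(G)| = (p ^ t)%N ->
  [/\ 'C_G(G^`(1)) = [set g in G | g ^+ (p ^ t) \in 'Z(G) * G^`(1)],
      ('C_G(G^`(1)))^`(1) = 'Mho^(m - t)(G^`(1))
    & forall N : {group gT}, N \subset 'C_G(G^`(1)) ->
        exists n : nat,
          [/\ jennings p (p ^ n) N = 1,
              forall k : nat, jennings p (p ^ k) N = 1 -> (n <= k)%N
            & exponent N = (p ^ n)%N]].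
Proof.
move=> p_pr p_odd pG /cyclicP[c defK] oK oKZ.
have oc : #[c] = (p ^ m)%N by rewrite orderE -defK.
split; first exact: (cent_der1E p_pr p_odd pG defK oc oKZ).
  exact: (der1_cent_der1 p_pr p_odd pG defK oc oKZ).
move=> N sNC.
have pN : p.-group N := pgroupS (subset_trans sNC (subsetIl G _)) pG.
have [n oN] : {n | exponent N = (p ^ n)%N} by apply: p_natP; rewrite pnat_exponent.
have p_gt2 := odd_prime_gt2 p_odd p_pr.
have jN k := jennings_ppow_eq1 pN k p_gt2 (lcn3_cent_der1_eq1 sNC).
exists n; split=> // [|k /eqP]; first by apply/eqP; rewrite jN oN.
by rewrite jN oN dvdn_Pexp2l ?prime_gt1.
Qed.
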